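(* Let $b\ge 2$ be an integer, $n=2^{b-2}$, and let $W^f\in\mathbb{R}^N$ be a nonzero vector whose components have pairwise distinct absolute values. Consider the problem $$\min_{s\in\mathbb{Z},\,Q\in\mathbb{R}^N}\ \|2^sQ-W^f\|_2^2\quad\text{subject to}\quad Q_i\in\{0,\pm 2^{1-n},\pm 2^{2-n},\dots,\pm 2^{-1},\pm 1\}\ \text{for all } i. \tag{P}$$ For a tuple $(k_0,\dots,k_{n-1})$ of nonnegative integers with $k_0+\dots+k_{n-1}\le N$, let $W^f_{[k_0]}$, $W^f_{[k_1]},\dots,W^f_{[k_{n-1}]}$ be as defined in the context, and set $$u(k)=\sum_{t=0}^{n-1}2^{-t}\|W^f_{[k_t]}\|_1,\qquad v(k)=\sum_{t=0}^{n-1}k_t\,2^{-2t}.$$ Define, for $u,v>0$, $$g(u,v)=v\left(2^{\lfloor \log_2 \frac{4u}{3v}\rfloor}-\frac{u}{v}\right)^2-\frac{u^2}{v}.$$ Let $(k_0^*,\dots,k_{n-1}^* )$ be a minimizer of $g(u(k),v(k))$ over all such tuples that are not identically zero. Then a minimizer $(s^*,Q^* )$ of (P) is given by $$Q^*=\sum_{t=0}^{n-1}2^{-t}\,\mathrm{sign}\big(W^f_{[k_t^*]}\big),\qquad s^*=\left\lfloor \log_2\frac{4\sum_{t=0}^{n-1}2^{-t}\|W^f_{[k^*_t]}\|_1}{3\sum_{t=0}^{n-1}k^*_t2^{-2t}}\right\rfloor,$$ and the optimal quantized vector is $2^{s^*}Q^*$.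
   Context: Notation: sort the indices of $W^f$ by decreasing $|W^f_i|$. Given nonnegative integers $k_0,\dots,k_{n-1}$ with $\sum_t k_t\le N$, the vector $W^f_{[k_0]}\in\mathbb{R}^N$ keeps the $k_0$ components of $W^f$ of largest magnitude and sets all other components to zero; $W^f_{[k_1]}$ keeps the next $k_1$ largest-magnitude components (those ranked $k_0+1,\dots,k_0+k_1$) and zeros out all others; in general $W^f_{[k_t]}$ keeps the components ranked $k_0+\dots+k_{t-1}+1,\dots,k_0+\dots+k_t$ in magnitude and zeros out the rest. $\mathrm{sign}$ is applied componentwise with $\mathrm{sign}(0)=0$. $\lfloor\cdot\rfloor$ is the floor function and $\|\cdot\|_1$ the $\ell^1$ norm. *)

From Stdlib Require Export Reals Lra ZArith.
Open Scope R_scope.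

Fixpoint rsum (m : nat) (f : nat -> R) : R :=
  match m with O => 0 | S m' => rsum m' f + f m' end.

Fixpoint nsum (m : nat) (f : nat -> nat) : nat :=
  match m with O => 0%nat | S m' => (nsum m' f + f m')%nat end.

Fixpoint ncount (m : nat) (P : nat -> bool) : nat :=
  match m with O => 0%nat | S m' => (ncount m' P + (if P m' then 1 else 0))%nat end.

Definition Rsign (x : R) : R :=
  if Rlt_dec 0 x then 1 else if Rlt_dec x 0 then -1 else 0.

Definition log2 (x : R) : R := ln x / ln 2.

(* floor function: Int_part x = up x - 1 is the floor of x *)
Definition Rfloor (x : R) : Z := Int_part x.

(* Vectors in R^N are functions nat -> R; only indices 0..N-1 matter. *)

(* 0-based rank of component i of W in decreasing order of magnitude:
   number of components with strictly larger magnitude *)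
Definition rank (N : nat) (W : nat -> R) (i : nat) : nat :=
  ncount N (fun j => if Rlt_dec (Rabs (W i)) (Rabs (W j)) then true else false).

Definition offset (k : nat -> nat) (t : nat) : nat := nsum t k.

(* W^f_[k_t]: keeps components of (0-based) rank in [offset t, offset t + k t) *)
Definition Wblock (N : nat) (W : nat -> R) (k : nat -> nat) (t : nat) (i : nat) : R :=
  if Nat.ltb i N then
    if andb (Nat.leb (offset k t) (rank N W i))
            (Nat.ltb (rank N W i) (offset k t + k t)) then W i else 0
  else 0.

Definition norm1 (N : nat) (x : nat -> R) : R := rsum N (fun i => Rabs (x i)).

Definition sqnorm_dist (N : nat) (x y : nat -> R) : R :=
  rsum N (fun i => (x i - y i) ^ 2).

Definition u_of (n N : nat) (W : nat -> R) (k : nat -> nat) : R :=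
  rsum n (fun t => / 2 ^ t * norm1 N (Wblock N W k t)).

Definition v_of (n : nat) (k : nat -> nat) : R :=
  rsum n (fun t => INR (k t) * / 2 ^ (2 * t)).

Definition g (u v : R) : R :=
  v * (powerRZ 2 (Rfloor (log2 (4 * u / (3 * v)))) - u / v) ^ 2 - u ^ 2 / v.

Definition admissible (n N : nat) (k : nat -> nat) : Prop :=
  (nsum n k <= N)%nat /\ exists t, (t < n)%nat /\ k t <> 0%nat.

Definition feasibleQ (n N : nat) (Q : nat -> R) : Prop :=
  forall i, (i < N)%nat ->
    Q i = 0 \/ exists j, (j < n)%nat /\ (Q i = / 2 ^ j \/ Q i = - / 2 ^ j).

Definition Qstar (n N : nat) (W : nat -> R) (k : nat -> nat) (i : nat) : R :=
  rsum n (fun t => / 2 ^ t * Rsign (Wblock N W k t i)).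

Definition sstar (n N : nat) (W : nat -> R) (k : nat -> nat) : Z :=
  Rfloor (log2 (4 * u_of n N W k / (3 * v_of n k))).

Definition objective (N : nat) (W : nat -> R) (s : Z) (Q : nat -> R) : R :=
  sqnorm_dist N (fun i => powerRZ 2 s * Q i) W.

From Stdlib Require Import Reals Lra Lia ZArith List.
Open Scope R_scope.

(* Writing c = 2^s, the objective is c^2 |Q|^2 - 2 c <Q, W> + |W|^2.  For a feasible Q let
   k_t count the entries with |Q_i| = 2^-t.  Then |Q|^2 = v(k), and summation by parts against
   the decreasing weights 2^-t together with the bathtub principle gives <Q, W> <= u(k), with
   equality for the vector Q^star built from the blocks W_[k_t].  Over powers of two c, the
   quadratic v c^2 - 2 c u is minimised at the exponent floor (log2 (4u / 3v)) with minimum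
   g(u, v).  Hence every feasible (s, Q) costs at least |W|^2 + g(u(k), v(k)), which is at
   least |W|^2 + g(u(k^star), v(k^star)), a value attained by (s^star, Q^star).  The case
   u(k) = 0 is covered because g(u(k^star), v(k^star)) < 0, as the tuple (1, 0, ..., 0)
   already shows. *)

(** * Finite sums *)

Lemma rsum_ext m f f' :
  (forall i, (i < m)%nat -> f i = f' i) -> rsum m f = rsum m f'.
Proof.
  induction m as [|m IH]; intros H; simpl; [reflexivity|].
  rewrite IH by (intros; apply H; lia). rewrite H by lia. reflexivity.
Qed.

Lemma rsum_plus m f f' : rsum m (fun i => f i + f' i) = rsum m f + rsum m f'.
Proof. induction m as [|m IH]; simpl; [ring|]. rewrite IH. ring. Qed.

Lemma rsum_minus m f f' : rsum m (fun i => f i - f' i) = rsum m f - rsum m f'.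
Proof. induction m as [|m IH]; simpl; [ring|]. rewrite IH. ring. Qed.

Lemma rsum_scal m c f : rsum m (fun i => c * f i) = c * rsum m f.
Proof. induction m as [|m IH]; simpl; [ring|]. rewrite IH. ring. Qed.

Lemma rsum_le m f f' :
  (forall i, (i < m)%nat -> f i <= f' i) -> rsum m f <= rsum m f'.
Proof.
  induction m as [|m IH]; intros H; simpl; [lra|].
  apply Rplus_le_compat; [apply IH; intros; apply H | apply H]; lia.
Qed.

Lemma rsum_eq_0 m f : (forall i, (i < m)%nat -> f i = 0) -> rsum m f = 0.
Proof.
  induction m as [|m IH]; intros H; simpl; [reflexivity|].
  rewrite IH by (intros; apply H; lia). rewrite H by lia. ring.
Qed.

Lemma rsum_nonneg m f : (forall i, (i < m)%nat -> 0 <= f i) -> 0 <= rsum m f.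
Proof.
  intros H. apply Rle_trans with (rsum m (fun _ => 0)).
  - right. symmetry. apply rsum_eq_0. reflexivity.
  - apply rsum_le, H.
Qed.

Lemma rsum_ge_term m f t :
  (forall i, (i < m)%nat -> 0 <= f i) -> (t < m)%nat -> f t <= rsum m f.
Proof.
  induction m as [|m IH]; intros H Ht; simpl; [lia|].
  assert (0 <= rsum m f) by (apply rsum_nonneg; intros; apply H; lia).
  assert (0 <= f m) by (apply H; lia).
  destruct (Nat.eq_dec t m) as [->|]; [lra|].
  assert (f t <= rsum m f) by (apply IH; [intros; apply H|]; lia). lra.
Qed.

Lemma rsum_pos_term m f : 0 < rsum m f -> exists i, (i < m)%nat /\ 0 < f i.
Proof.
  induction m as [|m IH]; simpl; intros H; [lra|].
  destruct (Rlt_dec 0 (f m)) as [Hm|Hm]; [exists m; split; [lia|assumption]|].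
  destruct IH as [i [Hi Hfi]]; [lra|]. exists i. split; [lia|assumption].
Qed.

Lemma rsum_comm n m (F : nat -> nat -> R) :
  rsum n (fun t => rsum m (fun i => F t i)) = rsum m (fun i => rsum n (fun t => F t i)).
Proof.
  induction n as [|n IH]; simpl; [symmetry; apply rsum_eq_0; reflexivity|].
  rewrite IH, <- rsum_plus. reflexivity.
Qed.

Lemma rsum_single m f t :
  (t < m)%nat -> (forall t', (t' < m)%nat -> t' <> t -> f t' = 0) -> rsum m f = f t.
Proof.
  induction m as [|m IH]; intros Ht H; simpl; [lia|].
  destruct (Nat.eq_dec t m) as [->|].
  - rewrite rsum_eq_0 by (intros; apply H; lia). ring.
  - rewrite IH, (H m) by (try (intros; apply H); lia). ring.
Qed.

Lemma rsum_1 m : rsum m (fun _ => 1) = INR m.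
Proof. induction m as [|m IH]; [reflexivity|]. rewrite S_INR, <- IH. reflexivity. Qed.

Lemma support_at_most_one m (f : nat -> R) :
  (forall t t', (t < m)%nat -> (t' < m)%nat -> t <> t' -> f t = 0 \/ f t' = 0) ->
  (forall t, (t < m)%nat -> f t = 0) \/
  exists t, (t < m)%nat /\ forall t', (t' < m)%nat -> t' <> t -> f t' = 0.
Proof.
  induction m as [|m IH]; intros Hdisj; [left; intros; lia|].
  right. destruct IH as [Hzero | [t [Ht Hothers]]]; [intros; apply Hdisj; lia| |].
  - exists m. split; [lia|]. intros t' Ht' Hne. apply Hzero. lia.
  - destruct (Hdisj t m) as [Hft | Hfm]; try lia.
    + exists m. split; [lia|]. intros t' Ht' Hne.
      destruct (Nat.eq_dec t' t) as [->|]; [exact Hft | apply Hothers; lia].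
    + exists t. split; [lia|]. intros t' Ht' Hne.
      destruct (Nat.eq_dec t' m) as [->|]; [exact Hfm | apply Hothers; lia].
Qed.

Lemma rsum_sqr_disjoint m f :
  (forall t t', (t < m)%nat -> (t' < m)%nat -> t <> t' -> f t = 0 \/ f t' = 0) ->
  (rsum m f) ^ 2 = rsum m (fun t => f t ^ 2).
Proof.
  intros Hdisj. destruct (support_at_most_one m f Hdisj) as [Hzero | [t [Ht Hothers]]].
  - rewrite !rsum_eq_0 by (intros; rewrite ?Hzero by lia; ring). ring.
  - rewrite (rsum_single m f t), (rsum_single m _ t)
      by (try (intros; rewrite Hothers by lia); (ring || lia)).
    reflexivity.
Qed.

Lemma weighted_increments_le m (w a c : nat -> R) :
  (forall t, 0 <= w (S t) <= w t) -> (forall t, (t <= m)%nat -> a t <= c t) -> a O = c O ->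
  rsum m (fun t => w t * (a (S t) - a t)) <= rsum m (fun t => w t * (c (S t) - c t)).
Proof.
  intros Hw Hac H0.
  assert (Habel : forall p, (p <= m)%nat ->
    w p * (c p - a p)
    <= rsum p (fun t => w t * (c (S t) - c t)) - rsum p (fun t => w t * (a (S t) - a t))).
  { induction p as [|p IH]; intros Hp; simpl; [rewrite H0; lra|].
    specialize (IH ltac:(lia)). specialize (Hac (S p) Hp). destruct (Hw p).
    assert (w (S p) * (c (S p) - a (S p)) <= w p * (c (S p) - a (S p)))
      by (apply Rmult_le_compat_r; lra).
    lra. }
  assert (Hwm : 0 <= w m) by (destruct (Hw m); lra).
  assert (0 <= w m * (c m - a m)) by (apply Rmult_le_pos; [|specialize (Hac m (le_n m))]; lra).
  specialize (Habel m (le_n m)). lra.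
Qed.

(** * Powers of two and the function [g] *)

Lemma powerRZ_2_pos s : 0 < powerRZ 2 s.
Proof. apply powerRZ_lt. lra. Qed.

Lemma powerRZ_2_le s s' : (s <= s')%Z -> powerRZ 2 s <= powerRZ 2 s'.
Proof.
  intros H. rewrite !powerRZ_Rpower by lra.
  apply Rle_Rpower; [lra | apply IZR_le, H].
Qed.

Lemma powerRZ_2_succ s : powerRZ 2 (s + 1) = 2 * powerRZ 2 s.
Proof. rewrite powerRZ_add by lra. simpl. ring. Qed.

Lemma Rpower_2_log2 y : 0 < y -> Rpower 2 (log2 y) = y.
Proof.
  intros Hy. unfold Rpower, log2.
  assert (0 < ln 2) by (rewrite <- ln_1; apply ln_increasing; lra).
  replace (ln y / ln 2 * ln 2) with (ln y) by (field; lra). apply exp_ln, Hy.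
Qed.

Lemma powerRZ_2_floor_log2 y : 0 < y ->
  powerRZ 2 (Rfloor (log2 y)) <= y < 2 * powerRZ 2 (Rfloor (log2 y)).
Proof.
  intros Hy. unfold Rfloor. destruct (base_Int_part (log2 y)) as [Hlo Hhi].
  rewrite <- powerRZ_2_succ, !powerRZ_Rpower, plus_IZR by lra.
  set (e := log2 y) in *. rewrite <- (Rpower_2_log2 y Hy). fold e.
  split; [apply Rle_Rpower | apply Rpower_lt]; lra.
Qed.

Lemma inv_pow2_pos t : 0 < / 2 ^ t.
Proof. apply Rinv_0_lt_compat, pow_lt. lra. Qed.

Lemma inv_pow2_succ_le t : 0 <= / 2 ^ S t <= / 2 ^ t.
Proof.
  assert (H := inv_pow2_pos t). simpl. rewrite Rinv_mult.
  split; [apply Rmult_le_pos|]; lra.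
Qed.

Lemma inv_pow2_inj t t' : / 2 ^ t = / 2 ^ t' -> t = t'.
Proof.
  intros H. apply Rinv_eq_reg in H.
  destruct (Nat.lt_total t t') as [Hlt | [Heq | Hlt]]; [|assumption|];
    apply (Rlt_pow 2) in Hlt; lra.
Qed.

Lemma inv_pow2_sqr t : (/ 2 ^ t) ^ 2 = / 2 ^ (2 * t).
Proof. rewrite <- pow_inv, <- pow_mult, pow_inv, Nat.mul_comm. reflexivity. Qed.

Definition g_scale (u v : R) : Z := Rfloor (log2 (4 * u / (3 * v))).

Lemma g_eq u v : v <> 0 ->
  g u v = v * powerRZ 2 (g_scale u v) ^ 2 - 2 * powerRZ 2 (g_scale u v) * u.
Proof. intros Hv. unfold g, g_scale. field. exact Hv. Qed.

Lemma g_scale_bounds u v : 0 < u -> 0 < v ->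
  3 * v * powerRZ 2 (g_scale u v) <= 4 * u < 6 * v * powerRZ 2 (g_scale u v).
Proof.
  intros Hu Hv. unfold g_scale.
  assert (Hy : 0 < 4 * u / (3 * v)) by (apply Rdiv_lt_0_compat; lra).
  destruct (powerRZ_2_floor_log2 _ Hy) as [Hlo Hhi].
  set (c := powerRZ 2 _) in *.
  assert (E : 4 * u = 3 * v * (4 * u / (3 * v))) by (field; lra).
  split; rewrite E; nra.
Qed.

Lemma g_neg u v : 0 < u -> 0 < v -> g u v < 0.
Proof.
  intros Hu Hv. rewrite g_eq by lra.
  destruct (g_scale_bounds u v Hu Hv) as [Hlo _].
  assert (Hc := powerRZ_2_pos (g_scale u v)). nra.
Qed.

Lemma g_le_quadratic u v s : 0 < u -> 0 < v ->
  g u v <= v * powerRZ 2 s ^ 2 - 2 * powerRZ 2 s * u.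
Proof.
  intros Hu Hv. rewrite g_eq by lra.
  destruct (g_scale_bounds u v Hu Hv) as [Hlo Hhi].
  set (f := g_scale u v) in *. set (cf := powerRZ 2 f) in *. set (c := powerRZ 2 s).
  assert (Hcf : 0 < cf) by apply powerRZ_2_pos.
  (* the difference of the two sides factors as (c - cf) * (v * (c + cf) - 2 * u) *)
  destruct (Z.lt_trichotomy s f) as [Hsf | [-> | Hsf]].
  - assert (Hc : 2 * c <= cf).
    { unfold c, cf. replace f with (f - 1 + 1)%Z by ring. rewrite powerRZ_2_succ.
      apply Rmult_le_compat_l; [lra | apply powerRZ_2_le; lia]. }
    assert (0 <= v * (cf - 2 * c)) by (apply Rmult_le_pos; lra).
    assert (0 <= (cf - c) * (2 * u - v * (c + cf))) by (apply Rmult_le_pos; lra).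
    nra.
  - unfold c, cf. lra.
  - assert (Hc : 2 * cf <= c).
    { unfold c, cf. rewrite <- powerRZ_2_succ. apply powerRZ_2_le. lia. }
    assert (0 <= v * (c - 2 * cf)) by (apply Rmult_le_pos; lra).
    assert (0 <= (c - cf) * (v * (c + cf) - 2 * u)) by (apply Rmult_le_pos; lra).
    nra.
Qed.

(** * Counting and the bathtub principle *)

Definition b2R (b : bool) : R := if b then 1 else 0.

Lemma INR_ncount m P : INR (ncount m P) = rsum m (fun i => b2R (P i)).
Proof.
  induction m as [|m IH]; [reflexivity|]. simpl ncount. simpl rsum.
  rewrite plus_INR, IH. unfold b2R. destruct (P m); reflexivity.
Qed.

Lemma INR_nsum m k : INR (nsum m k) = rsum m (fun t => INR (k t)).
Proof. induction m as [|m IH]; [reflexivity|]. simpl. rewrite plus_INR, IH. reflexivity. Qed.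

Lemma ncount_ext m P P' : (forall i, (i < m)%nat -> P i = P' i) -> ncount m P = ncount m P'.
Proof.
  induction m as [|m IH]; intros H; simpl; [reflexivity|].
  rewrite IH by (intros; apply H; lia). rewrite H by lia. reflexivity.
Qed.

Lemma ncount_mono m P P' :
  (forall i, (i < m)%nat -> P i = true -> P' i = true) -> (ncount m P <= ncount m P')%nat.
Proof.
  induction m as [|m IH]; intros Hsub; simpl; [lia|].
  specialize (IH ltac:(intros i Hi; apply Hsub; lia)). specialize (Hsub m ltac:(lia)).
  destruct (P m), (P' m); lia.
Qed.

Lemma ncount_strict m P P' :
  (forall i, (i < m)%nat -> P i = true -> P' i = true) ->
  (exists j, (j < m)%nat /\ P j = false /\ P' j = true) -> (ncount m P < ncount m P')%nat.
Proof.
  induction m as [|m IH]; intros Hsub [j [Hj [HPj HP'j]]]; simpl; [lia|].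
  destruct (Nat.eq_dec j m) as [->|].
  - rewrite HPj, HP'j. assert (ncount m P <= ncount m P')%nat by (apply ncount_mono; auto). lia.
  - assert (ncount m P < ncount m P')%nat
      by (apply IH; [intros i Hi; apply Hsub; lia | exists j; repeat split; auto; lia]).
    specialize (Hsub m ltac:(lia)).
    destruct (P m), (P' m); lia.
Qed.

Lemma ncount_compl m P : (ncount m P + ncount m (fun i => negb (P i)))%nat = m.
Proof. induction m as [|m IH]; simpl; [reflexivity|]. destruct (P m); simpl; lia. Qed.

Lemma ncount_filter m P : ncount m P = length (filter P (seq 0 m)).
Proof.
  induction m as [|m IH]; [reflexivity|].
  rewrite seq_S, filter_app, length_app, <- IH. simpl. destruct (P m); reflexivity.
Qed.

Lemma ncount_le_of_injective m P (r : nat -> nat) a c :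
  (forall i j, (i < m)%nat -> (j < m)%nat -> P i = true -> P j = true -> r i = r j -> i = j) ->
  (forall i, (i < m)%nat -> P i = true -> (a <= r i < c)%nat) ->
  (ncount m P <= c - a)%nat.
Proof.
  intros Hinj Hrange. rewrite ncount_filter.
  set (l := filter P (seq 0 m)).
  assert (Hl : forall i, In i l -> (i < m)%nat /\ P i = true).
  { intros i Hi. apply filter_In in Hi as [Hi HP]. apply in_seq in Hi. split; [lia | exact HP]. }
  assert (Hnodup : NoDup (map r l)).
  { apply NoDup_map_NoDup_ForallPairs; [|apply NoDup_filter, seq_NoDup].
    intros i j Hi Hj. apply Hl in Hi, Hj. apply Hinj; tauto. }
  assert (Hincl : incl (map r l) (seq a (c - a))).
  { intros x Hx. apply in_map_iff in Hx as [i [<- Hi]]. apply Hl in Hi as [Hi HP].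
    apply in_seq. specialize (Hrange i Hi HP). lia. }
  apply NoDup_incl_length in Hincl; [|exact Hnodup].
  rewrite length_map, length_seq in Hincl. exact Hincl.
Qed.

Lemma threshold_exists m (a : nat -> R) (S : nat -> bool) :
  (forall i, (i < m)%nat -> 0 <= a i) ->
  (forall i j, (i < m)%nat -> (j < m)%nat -> S i = true -> S j = false -> a j <= a i) ->
  exists theta, 0 <= theta /\
    (forall i, (i < m)%nat -> S i = true -> theta <= a i) /\
    (forall i, (i < m)%nat -> S i = false -> a i <= theta).
Proof.
  intros Hpos Hord.
  (* theta is the largest value of [a] outside [S], or 0 if there is none *)
  assert (Hmax : exists theta, 0 <= theta /\
    (theta = 0 \/ exists j, (j < m)%nat /\ S j = false /\ theta = a j) /\
    forall i, (i < m)%nat -> S i = false -> a i <= theta).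
  { clear Hord. induction m as [|m IH].
    - exists 0. repeat split; [lra | left; reflexivity | intros; lia].
    - destruct IH as [theta [Hnn [Hwit Hup]]]; [intros; apply Hpos; lia|].
      destruct (S m) eqn:HSm.
      + exists theta. repeat split; [exact Hnn | |].
        * destruct Hwit as [|[j [Hj Hj']]]; [left; assumption|].
          right. exists j. split; [lia | exact Hj'].
        * intros i Hi HSi. destruct (Nat.eq_dec i m) as [->|]; [congruence|].
          apply Hup; [lia | exact HSi].
      + exists (Rmax theta (a m)). repeat split.
        * apply Rle_trans with theta; [exact Hnn | apply Rmax_l].
        * apply Rmax_case_strong; intros _; [destruct Hwit as [|[j [Hj Hj']]] |].
          -- left; assumption.
          -- right; exists j; split; [lia | exact Hj'].
          -- right; exists m; split; [lia | split; [exact HSm | reflexivity]].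
        * intros i Hi HSi. destruct (Nat.eq_dec i m) as [->|]; [apply Rmax_r|].
          apply Rle_trans with theta; [apply Hup; [lia | exact HSi] | apply Rmax_l]. }
  destruct Hmax as [theta [Hnn [Hwit Hup]]].
  exists theta. repeat split; [exact Hnn | | exact Hup].
  intros i Hi HSi.
  destruct Hwit as [-> | [j [Hj [HSj ->]]]]; [apply Hpos, Hi | apply Hord; assumption].
Qed.

Lemma bathtub m (F a : nat -> R) (S : nat -> bool) theta :
  0 <= theta ->
  (forall i, (i < m)%nat -> S i = true -> theta <= a i) ->
  (forall i, (i < m)%nat -> S i = false -> a i <= theta) ->
  (forall i, (i < m)%nat -> 0 <= F i <= 1) ->
  rsum m F <= rsum m (fun i => b2R (S i)) ->
  rsum m (fun i => F i * a i) <= rsum m (fun i => b2R (S i) * a i).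
Proof.
  intros Htheta Hin Hout HF Hmass.
  assert (Hpt : forall i, (i < m)%nat ->
    theta * (b2R (S i) - F i) <= b2R (S i) * a i - F i * a i).
  { intros i Hi. specialize (HF i Hi). unfold b2R. destruct (S i) eqn:HSi.
    - specialize (Hin i Hi HSi). nra.
    - specialize (Hout i Hi HSi). nra. }
  apply rsum_le in Hpt. rewrite rsum_scal, !rsum_minus in Hpt.
  assert (0 <= theta * (rsum m (fun i => b2R (S i)) - rsum m F)) by (apply Rmult_le_pos; lra).
  lra.
Qed.

Definition topsum (N : nat) (W : nat -> R) (m : nat) : R :=
  rsum N (fun i => b2R (Nat.ltb (rank N W i) m) * Rabs (W i)).

Section Rank.

Variables (N : nat) (W : nat -> R).

Lemma rank_lt i : (i < N)%nat -> (rank N W i < N)%nat.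
Proof.
  intros Hi. replace N with (ncount N (fun _ => true)) at 2 by (clear; induction N; simpl; lia).
  apply ncount_strict; [reflexivity|]. exists i. split; [exact Hi|].
  destruct Rlt_dec; [lra | auto].
Qed.

Lemma abs_lt_of_rank_lt i j : (rank N W i < rank N W j)%nat -> Rabs (W j) < Rabs (W i).
Proof.
  intros H. destruct (Rlt_le_dec (Rabs (W j)) (Rabs (W i))) as [|Hle]; [assumption|].
  enough (rank N W j <= rank N W i)%nat by lia.
  apply ncount_mono. intros x _. do 2 destruct Rlt_dec; auto; lra.
Qed.

Lemma rank_lt_of_abs_lt i j :
  (j < N)%nat -> Rabs (W i) < Rabs (W j) -> (rank N W j < rank N W i)%nat.
Proof.
  intros Hj H. apply ncount_strict.
  - intros x _. do 2 destruct Rlt_dec; auto; lra.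
  - exists j. split; [exact Hj|]. do 2 destruct Rlt_dec; auto; lra.
Qed.

Hypothesis Hdistinct :
  forall i j, (i < N)%nat -> (j < N)%nat -> i <> j -> Rabs (W i) <> Rabs (W j).

Lemma rank_inj i j : (i < N)%nat -> (j < N)%nat -> rank N W i = rank N W j -> i = j.
Proof.
  intros Hi Hj Hrank. destruct (Nat.eq_dec i j) as [|Hij]; [assumption|].
  specialize (Hdistinct i j Hi Hj Hij).
  destruct (Rlt_le_dec (Rabs (W i)) (Rabs (W j))) as [Hlt | Hle].
  - apply rank_lt_of_abs_lt in Hlt; [lia | exact Hj].
  - assert (Hlt : Rabs (W j) < Rabs (W i)) by lra.
    apply rank_lt_of_abs_lt in Hlt; [lia | exact Hi].
Qed.

Lemma ncount_rank_between a c :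
  (ncount N (fun i => andb (Nat.leb a (rank N W i)) (Nat.ltb (rank N W i) c)) <= c - a)%nat.
Proof.
  apply ncount_le_of_injective with (r := rank N W).
  - intros i j Hi Hj _ _. apply rank_inj; assumption.
  - intros i _ H. apply andb_prop in H as [H1 H2].
    apply Nat.leb_le in H1. apply Nat.ltb_lt in H2. lia.
Qed.

Lemma ncount_rank_lt m : (Nat.min m N <= ncount N (fun i => Nat.ltb (rank N W i) m))%nat.
Proof.
  assert (Hcompl := ncount_compl N (fun i => Nat.ltb (rank N W i) m)).
  assert (Hrest : ncount N (fun i => negb (Nat.ltb (rank N W i) m))
                  = ncount N (fun i => andb (Nat.leb m (rank N W i)) (Nat.ltb (rank N W i) N))).
  { apply ncount_ext. intros i Hi. assert (Hr := rank_lt i Hi).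
    destruct (Nat.ltb_spec (rank N W i) m), (Nat.leb_spec m (rank N W i)),
      (Nat.ltb_spec (rank N W i) N); simpl; reflexivity || lia. }
  assert (Hbound := ncount_rank_between m N). lia.
Qed.

Lemma topsum_ge m F :
  (forall i, (i < N)%nat -> 0 <= F i <= 1) -> rsum N F <= INR m ->
  rsum N (fun i => F i * Rabs (W i)) <= topsum N W m.
Proof.
  intros HF Hmass.
  destruct (threshold_exists N (fun i => Rabs (W i)) (fun i => Nat.ltb (rank N W i) m))
    as [theta [Htheta [Hin Hout]]].
  - intros. apply Rabs_pos.
  - intros i j _ _ Hi Hj. apply Nat.ltb_lt in Hi. apply Nat.ltb_ge in Hj.
    left. apply abs_lt_of_rank_lt. lia.
  - apply (bathtub N F _ _ theta); try assumption.
    rewrite <- INR_ncount.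
    apply Rle_trans with (INR (Nat.min m N)); [|apply le_INR, ncount_rank_lt].
    assert (rsum N F <= INR N) by (rewrite <- rsum_1; apply rsum_le; intros; apply HF; assumption).
    destruct (Nat.min_spec m N) as [[_ ->] | [_ ->]]; assumption.
Qed.

End Rank.

(** * Blocks and the optimal quantizer *)

Lemma topsum_0 N W : topsum N W 0 = 0.
Proof. apply rsum_eq_0. intros. simpl. ring. Qed.

Lemma objective_expand N W s Q : objective N W s Q =
  powerRZ 2 s ^ 2 * rsum N (fun i => Q i ^ 2) - 2 * powerRZ 2 s * rsum N (fun i => Q i * W i)
  + rsum N (fun i => W i ^ 2).
Proof.
  unfold objective, sqnorm_dist.
  rewrite (rsum_ext N _ (fun i =>
    powerRZ 2 s ^ 2 * Q i ^ 2 - 2 * powerRZ 2 s * (Q i * W i) + W i ^ 2)) by (intros; ring).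
  rewrite rsum_plus, rsum_minus, !rsum_scal. reflexivity.
Qed.

Lemma v_of_nonneg n k : 0 <= v_of n k.
Proof.
  apply rsum_nonneg. intros t _.
  apply Rmult_le_pos; [apply pos_INR | left; apply inv_pow2_pos].
Qed.

Lemma v_of_pos n N k : admissible n N k -> 0 < v_of n k.
Proof.
  intros [_ [t [Ht Hkt]]]. apply Rlt_le_trans with (INR (k t) * / 2 ^ (2 * t)).
  - apply Rmult_lt_0_compat; [apply lt_0_INR; lia | apply inv_pow2_pos].
  - apply (rsum_ge_term n (fun t => INR (k t) * / 2 ^ (2 * t))); [|exact Ht].
    intros. apply Rmult_le_pos; [apply pos_INR | left; apply inv_pow2_pos].
Qed.

Lemma offset_le k t t' : (t <= t')%nat -> (offset k t <= offset k t')%nat.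
Proof. induction 1 as [|t' _ IH]; [lia|]. unfold offset in *. simpl. lia. Qed.

Lemma Wblock_disjoint N W k t t' i :
  t <> t' -> Wblock N W k t i = 0 \/ Wblock N W k t' i = 0.
Proof.
  intros Htt'. unfold Wblock. destruct (Nat.ltb i N); [|auto].
  set (r := rank N W i).
  destruct (Nat.leb_spec (offset k t) r), (Nat.ltb_spec r (offset k t + k t)); simpl; auto.
  destruct (Nat.leb_spec (offset k t') r), (Nat.ltb_spec r (offset k t' + k t')); simpl; auto.
  exfalso. destruct (Nat.lt_ge_cases t t') as [Hlt | Hge].
  - assert (Hle := offset_le k (S t) t' Hlt). unfold offset in *. simpl in Hle. lia.
  - assert (Hle := offset_le k (S t') t ltac:(lia)). unfold offset in *. simpl in Hle. lia.
Qed.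

Lemma norm1_Wblock N W k t :
  norm1 N (Wblock N W k t) = topsum N W (offset k (S t)) - topsum N W (offset k t).
Proof.
  unfold norm1, topsum. rewrite <- rsum_minus. apply rsum_ext. intros i Hi.
  unfold Wblock. apply Nat.ltb_lt in Hi. rewrite Hi.
  change (offset k (S t)) with (offset k t + k t)%nat. unfold b2R.
  destruct (Nat.leb_spec (offset k t) (rank N W i)), (Nat.ltb_spec (rank N W i) (offset k t + k t)),
    (Nat.ltb_spec (rank N W i) (offset k t)); simpl; rewrite ?Rabs_R0; ring || lia.
Qed.

Lemma u_of_topsum n N W k : u_of n N W k =
  rsum n (fun t => / 2 ^ t * (topsum N W (offset k (S t)) - topsum N W (offset k t))).
Proof. apply rsum_ext. intros. rewrite norm1_Wblock. reflexivity. Qed.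

Lemma u_of_pos_support n N W k : 0 < u_of n N W k -> exists t, (t < n)%nat /\ k t <> 0%nat.
Proof.
  rewrite u_of_topsum. intros H. apply rsum_pos_term in H as [t [Ht Hpos]].
  exists t. split; [exact Ht|]. intros Hk.
  change (offset k (S t)) with (offset k t + k t)%nat in Hpos.
  rewrite Hk, Nat.add_0_r in Hpos. lra.
Qed.

Lemma Rsign_mul_self x : Rsign x * x = Rabs x.
Proof.
  unfold Rsign. destruct Rlt_dec; [rewrite Rabs_right; lra|].
  destruct Rlt_dec; [rewrite Rabs_left; lra|].
  replace x with 0 by lra. rewrite Rabs_R0. ring.
Qed.

Lemma Rsign_0 : Rsign 0 = 0.
Proof. unfold Rsign. destruct (Rlt_dec 0 0); [lra | reflexivity]. Qed.

Lemma Rsign_sqr_le x : Rsign x ^ 2 <= 1.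
Proof. unfold Rsign. do 2 (destruct Rlt_dec; [lra|]). lra. Qed.

Section Qstar.

Variables (n N : nat) (W : nat -> R) (k : nat -> nat).

Lemma Qstar_terms_disjoint i t t' : t <> t' ->
  / 2 ^ t * Rsign (Wblock N W k t i) = 0 \/ / 2 ^ t' * Rsign (Wblock N W k t' i) = 0.
Proof.
  intros Htt'. destruct (Wblock_disjoint N W k t t' i Htt') as [-> | ->];
    rewrite Rsign_0, Rmult_0_r; auto.
Qed.

Lemma Qstar_feasible : feasibleQ n N (Qstar n N W k).
Proof.
  intros i _. unfold Qstar.
  destruct (support_at_most_one n (fun t => / 2 ^ t * Rsign (Wblock N W k t i)))
    as [Hzero | [t [Ht Hothers]]]; [intros; apply Qstar_terms_disjoint; assumption | |].
  - left. apply rsum_eq_0, Hzero.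
  - rewrite (rsum_single _ _ t Ht Hothers). unfold Rsign.
    destruct Rlt_dec; [|destruct Rlt_dec]; [right; exists t; split; [exact Ht|] .. | left];
      [left | right | ]; lra.
Qed.

Lemma sum_Qstar_mul_W : rsum N (fun i => Qstar n N W k i * W i) = u_of n N W k.
Proof.
  unfold u_of, norm1.
  rewrite (rsum_ext N _ (fun i => rsum n (fun t => / 2 ^ t * Rabs (Wblock N W k t i)))).
  - rewrite <- rsum_comm. apply rsum_ext. intros. apply rsum_scal.
  - intros i _. unfold Qstar. rewrite Rmult_comm, <- rsum_scal. apply rsum_ext. intros t _.
    rewrite <- Rsign_mul_self. unfold Wblock.
    destruct (Nat.ltb i N); [destruct andb|]; rewrite ?Rsign_0; ring.
Qed.

Hypothesis Hdistinct :
  forall i j, (i < N)%nat -> (j < N)%nat -> i <> j -> Rabs (W i) <> Rabs (W j).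

Lemma sum_Qstar_sqr_le : rsum N (fun i => Qstar n N W k i ^ 2) <= v_of n k.
Proof.
  rewrite (rsum_ext N _ (fun i => rsum n (fun t => / 2 ^ (2 * t) * Rsign (Wblock N W k t i) ^ 2))).
  2:{ intros i _. unfold Qstar.
      rewrite rsum_sqr_disjoint by (intros; apply Qstar_terms_disjoint; assumption).
      apply rsum_ext. intros. rewrite <- inv_pow2_sqr. ring. }
  rewrite <- rsum_comm. apply rsum_le. intros t _. rewrite rsum_scal, Rmult_comm.
  apply Rmult_le_compat_r; [left; apply inv_pow2_pos|].
  set (in_block i :=
    andb (Nat.leb (offset k t) (rank N W i)) (Nat.ltb (rank N W i) (offset k t + k t))).
  apply Rle_trans with (INR (ncount N in_block)).
  - rewrite INR_ncount. apply rsum_le. intros i Hi. unfold Wblock, b2R, in_block.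
    apply Nat.ltb_lt in Hi. rewrite Hi.
    destruct andb; [apply Rsign_sqr_le | rewrite Rsign_0; lra].
  - apply le_INR. unfold in_block.
    assert (H := ncount_rank_between N W Hdistinct (offset k t) (offset k t + k t)). lia.
Qed.

Lemma objective_Qstar_le : 0 < v_of n k ->
  objective N W (sstar n N W k) (Qstar n N W k)
  <= g (u_of n N W k) (v_of n k) + rsum N (fun i => W i ^ 2).
Proof.
  intros Hv.
  rewrite objective_expand, sum_Qstar_mul_W, g_eq by lra.
  change (sstar n N W k) with (g_scale (u_of n N W k) (v_of n k)).
  set (c := powerRZ 2 _).
  assert (c ^ 2 * rsum N (fun i => Qstar n N W k i ^ 2) <= c ^ 2 * v_of n k)
    by (apply Rmult_le_compat_l; [apply pow2_ge_0 | apply sum_Qstar_sqr_le]).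
  lra.
Qed.

End Qstar.

(** * Feasible quantizers *)

Definition at_level (Q : nat -> R) (t i : nat) : bool :=
  if Req_EM_T (Rabs (Q i)) (/ 2 ^ t) then true else false.

Definition level_count (N : nat) (Q : nat -> R) (t : nat) : nat := ncount N (at_level Q t).

Definition level_below (Q : nat -> R) (t i : nat) : R := rsum t (fun t' => b2R (at_level Q t' i)).

Lemma at_level_disjoint Q i t t' :
  t <> t' -> b2R (at_level Q t i) = 0 \/ b2R (at_level Q t' i) = 0.
Proof.
  intros Htt'. unfold b2R, at_level.
  destruct Req_EM_T as [Ht|]; [|auto]. destruct Req_EM_T as [Ht'|]; [|auto].
  exfalso. apply Htt', inv_pow2_inj. congruence.
Qed.

Lemma level_below_bounds Q t i : 0 <= level_below Q t i <= 1.
Proof.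
  unfold level_below.
  destruct (support_at_most_one t (fun t' => b2R (at_level Q t' i)))
    as [Hzero | [t0 [Ht0 Hothers]]]; [intros; apply at_level_disjoint; assumption | |].
  - rewrite rsum_eq_0 by exact Hzero. lra.
  - rewrite (rsum_single _ _ t0 Ht0 Hothers). unfold b2R. destruct at_level; lra.
Qed.

Lemma sum_level_below N Q t :
  rsum N (fun i => level_below Q t i) = INR (offset (level_count N Q) t).
Proof.
  unfold level_below, offset, level_count. rewrite <- rsum_comm, INR_nsum.
  apply rsum_ext. intros. symmetry. apply INR_ncount.
Qed.

Lemma level_count_sum_le n N Q : (nsum n (level_count N Q) <= N)%nat.
Proof.
  apply INR_le. change (nsum n (level_count N Q)) with (offset (level_count N Q) n).
  rewrite <- sum_level_below, <- rsum_1. apply rsum_le. intros. apply level_below_bounds.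
Qed.

Section Levels.

Variables (n N : nat) (W Q : nat -> R).

Hypothesis HQ : feasibleQ n N Q.

Lemma level_decomposition (phi : R -> R) i : phi 0 = 0 -> (i < N)%nat ->
  phi (Rabs (Q i)) = rsum n (fun t => phi (/ 2 ^ t) * b2R (at_level Q t i)).
Proof.
  intros Hphi Hi. unfold at_level. destruct (HQ i Hi) as [Hz | [j [Hj Hval]]].
  - rewrite Hz, Rabs_R0, Hphi. symmetry. apply rsum_eq_0. intros t _.
    destruct Req_EM_T as [E|]; [|unfold b2R; ring].
    assert (H := inv_pow2_pos t). lra.
  - assert (Habs : Rabs (Q i) = / 2 ^ j).
    { assert (H := inv_pow2_pos j).
      destruct Hval as [-> | ->]; [|rewrite Rabs_Ropp]; apply Rabs_right; lra. }
    rewrite Habs, (rsum_single _ _ j Hj).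
    + destruct Req_EM_T; [unfold b2R; ring | contradiction].
    + intros t _ Htj. destruct Req_EM_T as [E|]; [|unfold b2R; ring].
      apply inv_pow2_inj in E. congruence.
Qed.

Lemma sum_Q_sqr : rsum N (fun i => Q i ^ 2) = v_of n (level_count N Q).
Proof.
  rewrite (rsum_ext N _ (fun i => rsum n (fun t => / 2 ^ (2 * t) * b2R (at_level Q t i)))).
  - rewrite <- rsum_comm. apply rsum_ext. intros t _.
    unfold level_count. rewrite rsum_scal, INR_ncount. ring.
  - intros i Hi. rewrite <- pow2_abs.
    etransitivity; [exact (level_decomposition (fun x => x ^ 2) i ltac:(cbv beta; ring) Hi)|].
    apply rsum_ext. intros. rewrite inv_pow2_sqr. reflexivity.
Qed.

Hypothesis Hdistinct :
  forall i j, (i < N)%nat -> (j < N)%nat -> i <> j -> Rabs (W i) <> Rabs (W j).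

(* Summation by parts against the decreasing weights 2^-t reduces the claim to
   the bathtub bound for the [W]-mass carried by the levels below [t]. *)
Lemma sum_Q_mul_W_le : rsum N (fun i => Q i * W i) <= u_of n N W (level_count N Q).
Proof.
  set (mass t := rsum N (fun i => level_below Q t i * Rabs (W i))).
  assert (Hdecomp : rsum N (fun i => Rabs (Q i) * Rabs (W i))
                    = rsum n (fun t => / 2 ^ t * (mass (S t) - mass t))).
  { rewrite (rsum_ext N _
      (fun i => rsum n (fun t => / 2 ^ t * (b2R (at_level Q t i) * Rabs (W i))))).
    - rewrite <- rsum_comm. apply rsum_ext. intros t _. rewrite rsum_scal. f_equal.
      unfold mass. rewrite <- rsum_minus. apply rsum_ext. intros i _.
      change (level_below Q (S t) i) with (level_below Q t i + b2R (at_level Q t i)). ring.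
    - intros i Hi.
      etransitivity;
        [exact (level_decomposition (fun x => x * Rabs (W i)) i ltac:(cbv beta; ring) Hi)|].
      apply rsum_ext. intros. ring. }
  apply Rle_trans with (rsum N (fun i => Rabs (Q i) * Rabs (W i))).
  { apply rsum_le. intros. rewrite <- Rabs_mult. apply Rle_abs. }
  rewrite Hdecomp, u_of_topsum.
  apply (weighted_increments_le n (fun t => / 2 ^ t) mass
           (fun t => topsum N W (offset (level_count N Q) t))).
  - apply inv_pow2_succ_le.
  - intros t _. apply topsum_ge; [exact Hdistinct | intros; apply level_below_bounds |].
    rewrite sum_level_below. lra.
  - cbv beta. change (offset (level_count N Q) 0) with 0%nat. rewrite topsum_0.
    apply rsum_eq_0. intros. unfold level_below. simpl. ring.
Qed.

Lemma objective_ge_quadratic s :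
  rsum N (fun i => W i ^ 2)
  + (v_of n (level_count N Q) * powerRZ 2 s ^ 2 - 2 * powerRZ 2 s * u_of n N W (level_count N Q))
  <= objective N W s Q.
Proof.
  rewrite objective_expand, sum_Q_sqr.
  assert (Hc := powerRZ_2_pos s).
  assert (powerRZ 2 s * rsum N (fun i => Q i * W i) <= powerRZ 2 s * u_of n N W (level_count N Q))
    by (apply Rmult_le_compat_l; [lra | exact sum_Q_mul_W_le]).
  lra.
Qed.

End Levels.

Definition k_first (t : nat) : nat := if Nat.eqb t 0 then 1%nat else 0%nat.

Lemma k_first_admissible n N : (1 <= n)%nat -> (1 <= N)%nat -> admissible n N k_first.
Proof.
  intros Hn HN. split; [|exists 0%nat; split; [lia | discriminate]].
  enough (Hsum : forall m, (1 <= m)%nat -> nsum m k_first = 1%nat) by (rewrite Hsum; assumption).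
  induction m as [|m IH]; intros Hm; [lia|]. destruct m as [|m]; [reflexivity|].
  change (nsum (S (S m)) k_first) with (nsum (S m) k_first + k_first (S m))%nat.
  rewrite IH by lia. reflexivity.
Qed.

Lemma u_of_k_first_pos n N W i :
  (forall i j, (i < N)%nat -> (j < N)%nat -> i <> j -> Rabs (W i) <> Rabs (W j)) ->
  (1 <= n)%nat -> (i < N)%nat -> W i <> 0 -> 0 < u_of n N W k_first.
Proof.
  intros Hdistinct Hn Hi HWi.
  apply Rlt_le_trans with (/ 2 ^ 0 * norm1 N (Wblock N W k_first 0)).
  2:{ apply (rsum_ge_term n (fun t => / 2 ^ t * norm1 N (Wblock N W k_first t))); [|lia].
      intros. apply Rmult_le_pos; [left; apply inv_pow2_pos|].
      apply rsum_nonneg. intros. apply Rabs_pos. }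
  rewrite norm1_Wblock. change (offset k_first 1) with 1%nat. change (offset k_first 0) with 0%nat.
  rewrite topsum_0, pow_O, Rinv_1, Rmult_1_l, Rminus_0_r.
  set (at_i j := b2R (Nat.eqb j i)).
  assert (Hsingle : forall f, rsum N (fun j => at_i j * f j) = f i).
  { intros f. rewrite (rsum_single N _ i Hi).
    - unfold at_i. rewrite Nat.eqb_refl. unfold b2R. ring.
    - intros j _ Hji. unfold at_i. apply Nat.eqb_neq in Hji. rewrite Hji. unfold b2R. ring. }
  apply Rlt_le_trans with (rsum N (fun j => at_i j * Rabs (W j))).
  - rewrite Hsingle. apply Rabs_pos_lt, HWi.
  - apply topsum_ge; [exact Hdistinct | intros; unfold at_i, b2R; destruct Nat.eqb; lra |].
    rewrite (rsum_ext N _ (fun j => at_i j * 1)) by (intros; ring). rewrite Hsingle. simpl. lra.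
Qed.

Theorem theorem1 (b : nat) (N : nat) (W : nat -> R) (kstar : nat -> nat) :
  (2 <= b)%nat ->
  (exists i, (i < N)%nat /\ W i <> 0) ->
  (forall i j, (i < N)%nat -> (j < N)%nat -> i <> j -> Rabs (W i) <> Rabs (W j)) ->
  let n := (2 ^ (b - 2))%nat in
  admissible n N kstar ->
  (forall k, admissible n N k ->
     g (u_of n N W kstar) (v_of n kstar) <= g (u_of n N W k) (v_of n k)) ->
  feasibleQ n N (Qstar n N W kstar) /\
  (forall (s : Z) (Q : nat -> R), feasibleQ n N Q ->
     objective N W (sstar n N W kstar) (Qstar n N W kstar) <= objective N W s Q).
Proof.
  intros _ [i0 [Hi0 HWi0]] Hdistinct n Hadm Hmin.
  assert (Hn : (1 <= n)%nat) by (apply Nat.le_succ_l, Nat.neq_0_lt_0, Nat.pow_nonzero; lia).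
  split; [apply Qstar_feasible|]. intros s Q HQ.
  assert (Hgstar : g (u_of n N W kstar) (v_of n kstar) < 0).
  { apply Rle_lt_trans with (1 := Hmin _ (k_first_admissible n N Hn ltac:(lia))).
    apply g_neg; [apply (u_of_k_first_pos n N W i0) | apply (v_of_pos n N), k_first_admissible];
      auto; lia. }
  apply Rle_trans with (1 := objective_Qstar_le n N W kstar Hdistinct (v_of_pos n N kstar Hadm)).
  apply Rle_trans with (2 := objective_ge_quadratic n N W Q HQ Hdistinct s).
  set (kQ := level_count N Q). rewrite Rplus_comm. apply Rplus_le_compat_l.
  assert (Hc := powerRZ_2_pos s).
  destruct (Rle_lt_dec (u_of n N W kQ) 0) as [Hu | Hu].
  - assert (0 <= v_of n kQ * powerRZ 2 s ^ 2)
      by (apply Rmult_le_pos; [apply v_of_nonneg | apply pow2_ge_0]).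
    assert (0 <= powerRZ 2 s * - u_of n N W kQ) by (apply Rmult_le_pos; lra).
    lra.
  - assert (HadmQ : admissible n N kQ)
      by (split; [apply level_count_sum_le | apply (u_of_pos_support n N W), Hu]).
    apply Rle_trans with (1 := Hmin _ HadmQ).
    apply g_le_quadratic; [exact Hu | apply (v_of_pos n N), HadmQ].
Qed.
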